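(* For all positive integers $m,n,w,d$ with $1\le w\le m-1$, $$A(m,n,w,d)\le A_{\mathrm S}\left(n(m-1),\,1-\frac{dm}{nw(m-w)}\right).$$
   Context: $J(m,w)$ denotes the set of binary vectors of length $m$ and Hamming weight $w$. Elements of $J(m,w)^n$ are identified with $m\times n$ binary matrices all of whose columns have weight $w$, with binary Hamming distance. $A(m,n,w,d)$ is the maximum cardinality of a nonempty subset of $J(m,w)^n$ with pairwise Hamming distances at least $2d$. For a positive integer $N$ and a real $s$, $A_{\mathrm S}(N,s)$ denotes the maximum cardinality of a spherical code of dimension $N$ and maximum cosine $s$, i.e. of a set of points on the unit sphere of $\mathbb{R}^N$ (Euclidean norm) such that the inner product of any two distinct points is at most $s$. *)

From HB Require Import structures.
From mathcomp Require Import all_boot all_order all_algebra.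
From mathcomp Require Import all_classical all_reals ereal.
Set Implicit Arguments. Unset Strict Implicit. Unset Printing Implicit Defensive.
Import Order.TTheory GRing.Theory Num.Theory.
Local Open Scope ring_scope.
Local Open Scope classical_set_scope.

(* Elements of J(m,w)^n : m x n binary matrices, every column of weight w. *)
Definition in_Jmwn (m n w : nat) (X : 'M[bool]_(m, n)) : bool :=
  [forall j : 'I_n, #|[set i : 'I_m | X i j]| == w].

Definition hamming (m n : nat) (X Y : 'M[bool]_(m, n)) : nat :=
  #|[set ij : 'I_m * 'I_n | X ij.1 ij.2 != Y ij.1 ij.2]|.

Definition const_weight_code (m n w d : nat) (C : {set 'M[bool]_(m, n)}) : bool :=
  [forall X in C, @in_Jmwn m n w X] &&
  [forall X in C, forall Y in C, (X != Y) ==> (2 * d <= @hamming m n X Y)%N].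

Definition A_cw (m n w d : nat) : nat :=
  \max_(C : {set 'M[bool]_(m, n)} | (C != finset.set0) && @const_weight_code m n w d C) #|C|.

Definition dotv (R : pzRingType) (N : nat) (u v : 'rV[R]_N) : R :=
  \sum_(i < N) u 0 i * v 0 i.

Definition spherical_code (R : realType) (N : nat) (s : R) (c : seq 'rV[R]_N) : Prop :=
  uniq c /\ (forall u, u \in c -> dotv u u = 1) /\
  (forall u v, u \in c -> v \in c -> u != v -> dotv u v <= s).

Definition A_S (R : realType) (N : nat) (s : R) : \bar R :=
  ereal_sup [set ((size c)%:R)%:E | c in [set c | @spherical_code R N s c]].

From HB Require Import structures.
From mathcomp Require Import all_boot all_order all_algebra.
From mathcomp Require Import all_classical all_reals ereal.
From mathcomp Require Import ring lra.
Set Implicit Arguments. Unset Strict Implicit. Unset Printing Implicit Defensive.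
Import Order.TTheory GRing.Theory Num.Theory.
Local Open Scope ring_scope.

(* Centre each column x of J(m,w) at (w/m)(1,...,1): it then lies in the
   hyperplane {sum = 0} of R^m, which is isometric to R^(m-1).  Two centred
   columns have inner product w(m-w)/m - d_H/2, so after summing over the n
   columns and normalising by N = n w (m-w)/m, a code of minimum distance 2d
   becomes a set of unit vectors of R^(n(m-1)) with pairwise inner products
   1 - d_H/(2N) <= 1 - d m/(n w (m-w)) < 1; the strict bound makes the map
   injective. *)

Lemma in_mksetb (T : Type) (b : T -> bool) x :
  (x \in [set y | b y]%classic) = b x.
Proof. by apply/idP/idP => [/set_mem|/mem_set]. Qed.

Lemma card_mksetb (T : finType) (b : T -> bool) :
  #|[set x | b x]%classic| = (\sum_x (b x : nat))%N.
Proof.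
rewrite -sum1_card [LHS]big_mkcond; apply: eq_bigr => x _.
by rewrite in_mksetb; case: (b x).
Qed.

Lemma hammingE m n (X Y : 'M[bool]_(m, n)) :
  hamming X Y = (\sum_i \sum_j (X i j != Y i j : nat))%N.
Proof. by rewrite /hamming card_mksetb pair_bigA. Qed.

Lemma hamming_refl m n (X : 'M[bool]_(m, n)) : hamming X X = 0%N.
Proof. by rewrite hammingE big1 // => i _; rewrite big1 // => j _; rewrite eqxx. Qed.

Lemma in_Jmwn_col_weight m n w (X : 'M[bool]_(m, n)) j :
  in_Jmwn w X -> (\sum_i (X i j : nat))%N = w.
Proof. by move=> /forallP /(_ j) /eqP; rewrite card_mksetb. Qed.

Lemma dotvZ (R : comPzRingType) N (a b : R) (u v : 'rV[R]_N) :
  dotv (a *: u) (b *: v) = a * b * dotv u v.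
Proof. by rewrite /dotv mulr_sumr; apply: eq_bigr => i _; rewrite !mxE mulrACA. Qed.

Lemma dotv_mxvec (R : pzRingType) p q (A B : 'M[R]_(p, q)) :
  dotv (mxvec A) (mxvec B) = \sum_i \sum_j A i j * B i j.
Proof.
rewrite /dotv (reindex (uncurry (@mxvec_index p q))) /=; last first.
  by case: (curry_mxvec_bij p q) => g h1 h2; exists g => x _; [apply: h1|apply: h2].
by rewrite pair_bigA; apply: eq_bigr => -[i j] _; rewrite !mxvecE.
Qed.

Section Centering.
Variables (R : numFieldType) (m w : nat).
Hypothesis m_gt0 : (0 < m)%N.

Definition center (x : 'I_m -> bool) (i : 'I_m) : R := (x i)%:R - w%:R / m%:R.

Let m_neq0 : m%:R != 0 :> R. Proof. by rewrite pnatr_eq0 -lt0n. Qed.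

Lemma sum_center (x : 'I_m -> bool) :
  (\sum_i (x i : nat))%N = w -> \sum_i center x i = 0.
Proof.
move=> wt_x; rewrite big_split /= sumrN sumr_const card_ord -natr_sum wt_x.
by rewrite -mulr_natl; field.
Qed.

Lemma dot_center (x y : 'I_m -> bool) :
  (\sum_i (x i : nat))%N = w -> (\sum_i (y i : nat))%N = w ->
  \sum_i center x i * center y i
    = (w * (m - w))%:R / m%:R - (\sum_i (x i != y i : nat))%:R / 2.
Proof.
move=> wt_x wt_y; set a : R := w%:R / m%:R.
have w_le_m : (w <= m)%N.
  by rewrite -wt_x -[X in (_ <= X)%N]card_ord -sum1_card leq_sum // => i _; case: (x i).
have pointwise i : center x i * center y i =
    ((x i)%:R + (y i)%:R - (x i != y i)%:R) / 2 - a * (x i)%:R - a * (y i)%:R + a * a.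
  by rewrite /center -/a; case: (x i); case: (y i) => /=; field.
rewrite (eq_bigr _ (fun i _ => pointwise i)) !big_split /= !sumrN -!mulr_sumr -mulr_suml.
rewrite !big_split /= sumrN sumr_const card_ord -!natr_sum wt_x wt_y.
by rewrite natrM natrB // -mulr_natl /a; field.
Qed.

End Centering.

Section HyperplaneIsometry.
Variables (R : rcfType) (k : nat).

(* Drop the last coordinate and shift the others by [c] times their sum [P].
   On [sum = 0] the dropped coordinate is [-P], and [c = 1 / (1 + sqrt (k+1))]
   solves [k c^2 + 2 c = 1], which is what makes the shift account for it. *)
Definition hyperplane_coord (p : 'I_k.+1 -> R) (l : 'I_k) : R :=
  p (widen_ord (leqnSn k) l)
  + (1 + Num.sqrt k.+1%:R)^-1 * \sum_(l' < k) p (widen_ord (leqnSn k) l').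

Lemma dot_hyperplane_coord (p q : 'I_k.+1 -> R) :
  \sum_i p i = 0 -> \sum_i q i = 0 ->
  \sum_l hyperplane_coord p l * hyperplane_coord q l = \sum_i p i * q i.
Proof.
rewrite !big_ord_recr /=; set P := \sum_(l < k) _; set Q := \sum_(l < k) _.
move=> /addr0_eq <- /addr0_eq <-; rewrite /hyperplane_coord -/P -/Q.
set r := Num.sqrt _; set c := (1 + r)^-1.
have expand l : (p (widen_ord (leqnSn k) l) + c * P) * (q (widen_ord (leqnSn k) l) + c * Q)
    = p (widen_ord (leqnSn k) l) * q (widen_ord (leqnSn k) l)
      + c * Q * p (widen_ord (leqnSn k) l) + c * P * q (widen_ord (leqnSn k) l)
      + c * P * (c * Q) by ring.
rewrite (eq_bigr _ (fun l _ => expand l)) !big_split /= -!mulr_sumr sumr_const card_ord.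
have r_ge0 : 0 <= r by apply: sqrtr_ge0.
have k_r : k%:R = r ^+ 2 - 1 :> R by rewrite sqr_sqrtr ?ler0n // -addn1 natrD addrK.
have r1_neq0 : 1 + r != 0 by rewrite lt0r_neq0 //; lra.
by rewrite -mulr_natl k_r -/P -/Q /c; field.
Qed.

End HyperplaneIsometry.

Section SphericalEmbedding.
Variables (R : rcfType) (k n w : nat).

Definition embed_code_matrix (X : 'M[bool]_(k.+1, n)) : 'M[R]_(n, k) :=
  \matrix_(j, l) hyperplane_coord (center R w (X^~ j)) l.

Definition embed_sqnorm : R := (n * w * (k.+1 - w))%:R / k.+1%:R.

Lemma dotv_embed_code_matrix X Y : in_Jmwn w X -> in_Jmwn w Y ->
  dotv (mxvec (embed_code_matrix X)) (mxvec (embed_code_matrix Y))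
    = embed_sqnorm - (hamming X Y)%:R / 2.
Proof.
move=> X_J Y_J; rewrite dotv_mxvec.
under eq_bigr => j _.
  have wt_X := in_Jmwn_col_weight j X_J; have wt_Y := in_Jmwn_col_weight j Y_J.
  rewrite (eq_bigr _ (fun l _ => congr2 *%R (mxE _ _ j l) (mxE _ _ j l))).
  rewrite dot_hyperplane_coord ?sum_center // dot_center //.
  over.
rewrite big_split /= sumrN sumr_const card_ord -mulr_suml -natr_sum.
by rewrite hammingE exchange_big -mulrnAl -mulr_natr -natrM mulnC mulnA.
Qed.

Hypotheses (n_gt0 : (0 < n)%N) (w_gt0 : (0 < w)%N) (w_le_k : (w <= k)%N).

Lemma embed_sqnorm_gt0 : 0 < embed_sqnorm.
Proof. by rewrite divr_gt0 // ltr0n !muln_gt0 n_gt0 w_gt0 subn_gt0 ltnS. Qed.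

Definition sphere_point (X : 'M[bool]_(k.+1, n)) : 'rV[R]_(n * k) :=
  (Num.sqrt embed_sqnorm)^-1 *: mxvec (embed_code_matrix X).

Lemma dotv_sphere_point X Y : in_Jmwn w X -> in_Jmwn w Y ->
  dotv (sphere_point X) (sphere_point Y) = 1 - (hamming X Y)%:R / (2 * embed_sqnorm).
Proof.
move=> X_J Y_J; have N_gt0 := embed_sqnorm_gt0.
rewrite dotvZ dotv_embed_code_matrix // -invfM -expr2 sqr_sqrtr ?ltW //.
by field; rewrite lt0r_neq0.
Qed.

Lemma dotv_sphere_point_le d X Y : in_Jmwn w X -> in_Jmwn w Y ->
  (2 * d <= hamming X Y)%N ->
  dotv (sphere_point X) (sphere_point Y) <= 1 - d%:R / embed_sqnorm.
Proof.
move=> X_J Y_J dist_XY; have N_gt0 := embed_sqnorm_gt0.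
rewrite dotv_sphere_point // lerD2l lerN2 (invfM 2) mulrA ler_pM2r ?invr_gt0 //.
by rewrite ler_pdivlMr // -natrM ler_nat mulnC.
Qed.

End SphericalEmbedding.

Lemma card_le_A_S (R : realType) N (s : R) (T : finType) (C : {set T})
    (f : T -> 'rV[R]_N) :
  s < 1 -> {in C, forall X, dotv (f X) (f X) = 1} ->
  {in C &, forall X Y, X != Y -> dotv (f X) (f Y) <= s} ->
  ((#|C|%:R : R)%:E <= A_S N s)%E.
Proof.
move=> s_lt1 f_unit f_sep; apply: ereal_sup_ubound.
exists (map f (enum C)); last by rewrite size_map -cardE.
have f_inj : {in C &, injective f}.
  move=> X Y X_C Y_C fXY; apply/eqP; apply: contraT => /(f_sep X Y X_C Y_C).
  by rewrite fXY f_unit // leNgt s_lt1.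
split; [|split].
- by rewrite map_inj_in_uniq ?enum_uniq // => X Y; rewrite !mem_enum; apply: f_inj.
- by move=> _ /mapP[X + ->]; rewrite mem_enum; apply: f_unit.
move=> _ _ /mapP[X + ->] /mapP[Y + ->]; rewrite !mem_enum => X_C Y_C fXY.
by apply: f_sep => //; apply: contra_neq fXY => ->.
Qed.

Lemma const_weight_code0 m n w d : @const_weight_code m n w d finset.set0.
Proof. by apply/andP; split; apply/forall_inP => X; rewrite finset.in_set0. Qed.

Lemma A_cw_le (R : realType) m n w d (B : \bar R) :
  (forall C, @const_weight_code m n w d C -> ((#|C|%:R : R)%:E <= B)%E) ->
  (((A_cw m n w d)%:R : R)%:E <= B)%E.
Proof.
move=> card_le; refine (big_ind (fun a : nat => ((a%:R : R)%:E <= B)%E) _ _ _).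
- by have := card_le _ (const_weight_code0 m n w d); rewrite finset.cards0.
- by move=> a b a_le b_le; case: (leqP a b).
by move=> C /andP[_ C_code]; apply: card_le.
Qed.

Theorem proposition12 (R : realType) (m n w d : nat) :
  (0 < m)%N -> (0 < n)%N -> (0 < d)%N -> (1 <= w)%N -> (w <= m - 1)%N ->
  (((A_cw m n w d)%:R : R)%:E <=
    A_S (n * (m - 1))
      (1 - (d * m)%:R / (n * w * (m - w))%:R : R))%E.
Proof.
case: m => // k _ n_gt0 d_gt0 w_gt0; rewrite subn1 /= => w_le_k.
have N_gt0 := embed_sqnorm_gt0 R n_gt0 w_gt0 w_le_k.
have -> : (d * k.+1)%:R / (n * w * (k.+1 - w))%:R = d%:R / embed_sqnorm R k n w :> R.
  by rewrite /embed_sqnorm invf_div natrM mulrA.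
apply: A_cw_le => C /andP[/forall_inP C_J /forall_inP C_dist].
apply: (card_le_A_S (f := sphere_point R w)).
- by rewrite gtrBl divr_gt0 // ltr0n.
- by move=> X X_C; rewrite dotv_sphere_point ?C_J // hamming_refl mul0r subr0.
move=> X Y X_C Y_C XY; apply: dotv_sphere_point_le; rewrite ?C_J //.
by move: (C_dist X X_C) => /forall_inP /(_ Y Y_C) /implyP; apply.
Qed.
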